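(* Let $\epsilon_\tau,\omega_1,\omega_2\in(0,1)$, $\tau_{\mathrm{prev}}>0$, $c\in\mathbb{R}^m$, and set $a:=(1-\epsilon_\tau)(1-\omega_1)(1-\omega_2)\|c\|_1$. For a real number $h$ define the update $T(h):=\tau_{\mathrm{prev}}$ if $\|c\|_1=0$ or $h\le a/\tau_{\mathrm{prev}}$, and $T(h):=a/h$ otherwise. Let $\theta_3>0$, $\beta\in(0,1)$, $\sigma\in[2,4]$ with $\theta_3\beta^{\sigma/2}\le\tfrac12$, and let $h,\bar h\in\mathbb{R}$ satisfy $|\bar h-h|\le\theta_3\beta^{\sigma/2}|h|$. Then $|T(\bar h)-T(h)|\le2\theta_3\beta^{\sigma/2}\tau_{\mathrm{prev}}$. Consequently, if $\tau_{\mathrm{prev}}\le\tau_{\max}$, $g,d\in\mathbb{R}^n$ and $D\ge0$ satisfy $|g^Td|\le\kappa_{gd,\Delta l}D$, then $$|(T(\bar h)-T(h))\,g^Td|\le 2\theta_3\tau_{\max}\kappa_{gd,\Delta l}\,\beta^{\sigma/2}D.$$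
   Context: In the paper, $h=g^Td+\max\{d^THd,\epsilon_d\|d\|_2^2\}$ (deterministic quantities), $\bar h=\bar g^T\bar d+\max\{\bar d^TH\bar d,\epsilon_d\|\bar d\|_2^2\}$ (stochastic quantities), $T(\bar h)$ and $T(h)$ are the stochastic and deterministic merit parameters obtained from the previous value $\tau_{\mathrm{prev}}$, and $D=\Delta l(\tau,g,d)$. *)

From mathcomp Require Import all_boot all_order all_algebra.
From mathcomp Require Import all_classical all_reals all_analysis.
Set Implicit Arguments. Unset Strict Implicit. Unset Printing Implicit Defensive.
Import Order.TTheory GRing.Theory Num.Theory.
Local Open Scope ring_scope.

Definition norm1 (R : realType) (m : nat) (c : 'rV[R]_m) : R :=
  \sum_(i < m) `|c ord0 i|.

Definition dotv (R : realType) (n : nat) (g d : 'rV[R]_n) : R :=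
  \sum_(i < n) g ord0 i * d ord0 i.

Definition merit_a (R : realType) (m : nat) (eps w1 w2 : R) (c : 'rV[R]_m) : R :=
  (1 - eps) * (1 - w1) * (1 - w2) * norm1 c.

Definition Tupd (R : realType) (m : nat) (eps w1 w2 tprev : R) (c : 'rV[R]_m)
  (h : R) : R :=
  let a := merit_a eps w1 w2 c in
  if (norm1 c == 0) || (h <= a / tprev) then tprev else a / h.

(* Writing [T(h) = a / max(h, a/tprev)] for [a > 0] and [e] for the relative
   error [theta3 beta^(sigma/2) <= 1/2], the difference
   [T(hbar) - T(h)] is [a (M - Mbar) / (M Mbar)] with [M] and [Mbar] the two
   maxima.  Since the max is 1-Lipschitz, [|M - Mbar| <= e |h| <= e M]
   when [h > 0], and [a / Mbar <= tprev]; so the difference is at most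
   [e tprev].  When [h <= 0] the relative error bound forces [hbar <= 0],
   and both updates keep [tprev]. *)
From mathcomp Require Import all_boot all_order all_algebra.
From mathcomp Require Import all_classical all_reals all_analysis.
From mathcomp Require Import ring lra.
Import Order.TTheory GRing.Theory Num.Theory.
Set Implicit Arguments. Unset Strict Implicit. Unset Printing Implicit Defensive.
Local Open Scope ring_scope.

Definition capped_ratio (R : realFieldType) (a t x : R) : R :=
  if x <= a / t then t else a / x.

Lemma ler_dist_maxl (R : realDomainType) (x y z : R) :
  `|Num.max x z - Num.max y z| <= `|x - y|.
Proof.
have [xz | zx] := leP x z; have [yz | zy] := leP y z;
  rewrite ?subrr ?normr0 //.
- by rewrite !ler0_norm ?opprB ?subr_le0 //; lra.
- by rewrite !ger0_norm ?subr_ge0 //; lra.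
Qed.

Section CappedRatio.
Variables (R : realFieldType) (a t : R).
Hypotheses (a_gt0 : 0 < a) (t_gt0 : 0 < t).

Lemma capped_ratioE (x : R) : capped_ratio a t x = a / Num.max x (a / t).
Proof.
rewrite /capped_ratio; case: leP => // _.
by rewrite invf_div mulrCA divff ?mulr1 // gt_eqF.
Qed.

Lemma div_max_le (x : R) : a / Num.max x (a / t) <= t.
Proof.
have at_gt0 : 0 < a / t by rewrite divr_gt0.
have M_gt0 : 0 < Num.max x (a / t) by rewrite lt_max at_gt0 orbT.
by rewrite ler_pdivrMr // -ler_pdivrMl // mulrC le_max lexx orbT.
Qed.

Lemma capped_ratio_nonpos (x : R) : x <= 0 -> capped_ratio a t x = t.
Proof.
by move=> x_le0; rewrite /capped_ratio (le_trans x_le0) // ltW // divr_gt0.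
Qed.

Lemma capped_ratio_rel_lipschitz (e x y : R) : 0 <= e <= 1 ->
  `|y - x| <= e * `|x| -> `|capped_ratio a t y - capped_ratio a t x| <= e * t.
Proof.
move=> /andP[e_ge0 e_le1] yx.
have [x_le0 | x_gt0] := leP x 0.
  have y_le0 : y <= 0.
    move: yx; rewrite (ler0_norm x_le0) ler_norml => /andP[_]; nra.
  by rewrite !capped_ratio_nonpos // subrr normr0 mulr_ge0 // ltW.
set M := Num.max x (a / t); set N := Num.max y (a / t).
have at_gt0 : 0 < a / t by rewrite divr_gt0.
have M_gt0 : 0 < M by rewrite lt_max at_gt0 orbT.
have N_gt0 : 0 < N by rewrite lt_max at_gt0 orbT.
have MN : `|M - N| <= e * M.
  apply: (le_trans (ler_dist_maxl x y (a / t))).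
  by rewrite distrC (le_trans yx) // gtr0_norm // ler_wpM2l // le_max lexx.
have -> : capped_ratio a t y - capped_ratio a t x = (M - N) / M * (a / N).
  by rewrite !capped_ratioE -/M -/N; field; rewrite !gt_eqF.
rewrite normrM (gtr0_norm (divr_gt0 a_gt0 N_gt0)).
apply: ler_pM; [exact: normr_ge0 | exact: ltW (divr_gt0 a_gt0 N_gt0) | |
  exact: div_max_le].
by rewrite normrM [`|M^-1|]gtr0_norm ?invr_gt0 // ler_pdivrMr.
Qed.

End CappedRatio.

Lemma merit_a_gt0 (R : realType) (m : nat) (eps w1 w2 : R) (c : 'rV[R]_m) :
  eps < 1 -> w1 < 1 -> w2 < 1 -> norm1 c != 0 -> 0 < merit_a eps w1 w2 c.
Proof.
move=> eps1 w11 w21 c_neq0.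
have c_ge0 : 0 <= norm1 c by rewrite sumr_ge0.
by rewrite !mulr_gt0 ?subr_gt0 // lt_neqAle eq_sym c_neq0.
Qed.

Lemma Tupd_capped (R : realType) (m : nat) (eps w1 w2 tprev : R)
    (c : 'rV[R]_m) (h : R) : norm1 c != 0 ->
  Tupd eps w1 w2 tprev c h = capped_ratio (merit_a eps w1 w2 c) tprev h.
Proof. by rewrite /Tupd => /negbTE ->. Qed.

Lemma Tupd_rel_lipschitz (R : realType) (m : nat) (eps w1 w2 tprev : R)
    (c : 'rV[R]_m) (e h hbar : R) :
  eps < 1 -> w1 < 1 -> w2 < 1 -> 0 < tprev -> 0 <= e <= 1 ->
  `|hbar - h| <= e * `|h| ->
  `|Tupd eps w1 w2 tprev c hbar - Tupd eps w1 w2 tprev c h| <= e * tprev.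
Proof.
move=> eps1 w11 w21 tprev_gt0 e01 hh.
have e_ge0 : 0 <= e by case/andP: e01.
have [c_eq0 | c_neq0] := eqVneq (norm1 c) 0.
  by rewrite /Tupd c_eq0 eqxx /= subrr normr0 mulr_ge0 // ltW.
rewrite !Tupd_capped //.
have a_gt0 := merit_a_gt0 eps1 w11 w21 c_neq0.
exact: (capped_ratio_rel_lipschitz a_gt0 tprev_gt0 e01 hh).
Qed.

Theorem lemma4p13 (R : realType) (m : nat) (eps w1 w2 tprev : R)
  (c : 'rV[R]_m) (theta3 beta sigma h hbar : R) :
  0 < eps < 1 -> 0 < w1 < 1 -> 0 < w2 < 1 -> 0 < tprev ->
  0 < theta3 -> 0 < beta < 1 -> 2 <= sigma <= 4 ->
  theta3 * beta `^ (sigma / 2) <= 2^-1 ->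
  `|hbar - h| <= theta3 * beta `^ (sigma / 2) * `|h| ->
  `|Tupd eps w1 w2 tprev c hbar - Tupd eps w1 w2 tprev c h|
     <= 2 * theta3 * beta `^ (sigma / 2) * tprev
  /\
  (forall (tmax kappa D : R) (n : nat) (g d : 'rV[R]_n),
     tprev <= tmax -> 0 <= D -> `|dotv g d| <= kappa * D ->
     `|(Tupd eps w1 w2 tprev c hbar - Tupd eps w1 w2 tprev c h) * dotv g d|
       <= 2 * theta3 * tmax * kappa * beta `^ (sigma / 2) * D).
Proof.
move=> /andP[_ eps1] /andP[_ w11] /andP[_ w21] tprev_gt0 theta3_gt0 _ _.
set e := theta3 * beta `^ (sigma / 2) => e_le_half hh.
have e_ge0 : 0 <= e by rewrite mulr_ge0 ?powR_ge0 // ltW.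
have dT : `|Tupd eps w1 w2 tprev c hbar - Tupd eps w1 w2 tprev c h|
            <= 2 * e * tprev.
  apply: le_trans (Tupd_rel_lipschitz c eps1 w11 w21 tprev_gt0 _ hh) _.
  - by rewrite e_ge0 /=; lra.
  - by rewrite ler_wpM2r ?(ltW tprev_gt0) //; lra.
split; first by rewrite mulrA in dT.
move=> tmax kappa D n g d tprev_le D_ge0 gd.
have kD_ge0 : 0 <= kappa * D by apply: le_trans gd.
rewrite normrM; apply: le_trans (ler_pM _ _ dT gd) _ => //.
have -> : 2 * theta3 * tmax * kappa * beta `^ (sigma / 2) * D
          = 2 * e * tmax * (kappa * D) by rewrite /e; ring.
by rewrite ler_wpM2r // ler_wpM2l // mulr_ge0.
Qed.
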